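(* Let $\mathbb{R}^n$ carry a norm $\|\cdot\|$, $Q\subseteq\mathbb{R}^n$ closed convex, $f:Q\to\mathbb{R}$ convex, continuous, differentiable with $\|\nabla f(x)-\nabla f(y)\|_*\le L\|x-y\|$ on $Q$, $h$ convex on $Q$, and let $F=f+h$ attain its minimum over $Q$ at $x_*$. Let $d$ be a prox-function with Bregman divergence $V$, $x_0\in Q$, $V(x_*,x_0)\le R^2$. Suppose only a $(\delta,L)$-oracle for $f$ is available and run the mirror triangle method with inexact $(\delta,L)$-oracle (see context) with starting point $x_0$, $N\ge1$ steps, the value $\delta$, and $0<L_0\le L$. Then $$F(x_N)-F(x_* )\le\frac{8LR^2}{(N+1)^2}+2N\delta.$$
   Context: $\|\lambda\|_*=\max_{\|\nu\|\le1}\langle\lambda,\nu\rangle$. Prox-function: continuously differentiable $d:Q\to\mathbb{R}$, $1$-strongly convex w.r.t. $\|\cdot\|$; $V(x,y)=d(x)-d(y)-\langle\nabla d(y),x-y\rangle$. A $(\delta,L)$-oracle returns for each query point $y\in Q$ a pair $(f_\delta(y),\nabla f_\delta(y))\in\mathbb{R}\times\mathbb{R}^n$ with $0\le f(x)-f_\delta(y)-\langle\nabla f_\delta(y),x-y\rangle\le\frac L2\|x-y\|^2+\delta$ for all $x\in Q$. Method: $y_0=u_0=x_0$, $L_1=L_0/2$, $\alpha_0=A_0=0$. Step $k+1$ ($k=0,\dots,N-1$) with current $L_{k+1}$: (i) $\alpha_{k+1}$ is the largest root of $A_k+\alpha=L_{k+1}\alpha^2$, $A_{k+1}=A_k+\alpha_{k+1}$;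 (ii) $y_{k+1}=(\alpha_{k+1}u_k+A_kx_k)/A_{k+1}$; (iii) $u_{k+1}=\arg\min_{x\in Q}\{V(x,u_k)+\alpha_{k+1}(f_\delta(y_{k+1})+\langle\nabla f_\delta(y_{k+1}),x-y_{k+1}\rangle+h(x))\}$; (iv) $x_{k+1}=(\alpha_{k+1}u_{k+1}+A_kx_k)/A_{k+1}$; (v) if $f_\delta(x_{k+1})\le f_\delta(y_{k+1})+\langle\nabla f_\delta(y_{k+1}),x_{k+1}-y_{k+1}\rangle+\frac{L_{k+1}}2\|x_{k+1}-y_{k+1}\|^2+\delta$, set $L_{k+2}=L_{k+1}/2$ and go to the next step; otherwise replace $L_{k+1}$ by $2L_{k+1}$ and repeat step $k+1$ from (i). *)

From mathcomp Require Import all_boot all_order all_algebra.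
From mathcomp Require Import classical_sets reals.
Set Implicit Arguments. Unset Strict Implicit. Unset Printing Implicit Defensive.
Import Order.TTheory GRing.Theory Num.Theory.
Local Open Scope classical_set_scope.
Local Open Scope ring_scope.

Section Defs.
Variables (R : realType) (n : nat).
Notation vec := 'rV[R]_n.

Definition dot (u v : vec) : R := \sum_(i < n) u 0 i * v 0 i.

Definition is_norm (nrm : vec -> R) : Prop :=
  [/\ forall x, 0 <= nrm x,
      forall x, nrm x = 0 -> x = 0,
      forall (a : R) x, nrm (a *: x) = `|a| * nrm x
    & forall x y, nrm (x + y) <= nrm x + nrm y].

Definition dualnorm (nrm : vec -> R) (l : vec) : R :=
  sup [set dot l nu | nu in [set nu | nrm nu <= 1]].

Definition convex_set (Q : set vec) : Prop :=
  forall x y (t : R), Q x -> Q y -> 0 <= t <= 1 -> Q (t *: x + (1 - t) *: y).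

Definition closed_set (nrm : vec -> R) (Q : set vec) : Prop :=
  forall x, (forall e : R, 0 < e -> exists2 q, Q q & nrm (q - x) < e) -> Q x.

Definition convex_on (Q : set vec) (f : vec -> R) : Prop :=
  forall x y (t : R), Q x -> Q y -> 0 <= t <= 1 ->
    f (t *: x + (1 - t) *: y) <= t * f x + (1 - t) * f y.

Definition strongly_convex_on (nrm : vec -> R) (Q : set vec) (f : vec -> R) : Prop :=
  forall x y (t : R), Q x -> Q y -> 0 <= t <= 1 ->
    f (t *: x + (1 - t) *: y) <= t * f x + (1 - t) * f y
                                   - t * (1 - t) / 2 * nrm (x - y) ^+ 2.

Definition continuous_on (nrm : vec -> R) (Q : set vec) (f : vec -> R) : Prop :=
  forall x, Q x -> forall e : R, 0 < e -> exists2 d : R, 0 < d &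
    forall y, Q y -> nrm (y - x) < d -> `|f y - f x| < e.

Definition vcontinuous_on (nrm : vec -> R) (Q : set vec) (g : vec -> vec) : Prop :=
  forall x, Q x -> forall e : R, 0 < e -> exists2 d : R, 0 < d &
    forall y, Q y -> nrm (y - x) < d -> nrm (g y - g x) < e.

Definition gradient_on (nrm : vec -> R) (Q : set vec) (f : vec -> R) (g : vec -> vec)
  : Prop :=
  forall x, Q x -> forall e : R, 0 < e -> exists2 d : R, 0 < d &
    forall y, Q y -> nrm (y - x) < d ->
      `|f y - f x - dot (g x) (y - x)| <= e * nrm (y - x).

Definition bregman (d : vec -> R) (gd : vec -> vec) (x y : vec) : R :=
  d x - d y - dot (gd y) (x - y).

Definition dL_oracle (nrm : vec -> R) (Q : set vec) (f : vec -> R)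
  (delta L : R) (fd : vec -> R) (gfd : vec -> vec) : Prop :=
  forall x y, Q x -> Q y ->
    0 <= f x - fd y - dot (gfd y) (x - y) <= L / 2 * nrm (x - y) ^+ 2 + delta.

(* One trial of steps (i)-(iv) with current constant M, from (A_k, x_k, u_k):
   outputs alpha_{k+1}, A_{k+1}, y_{k+1}, u_{k+1}, x_{k+1}. *)
Definition mtm_trial (Q : set vec) (V : vec -> vec -> R) (h : vec -> R)
  (fd : vec -> R) (gfd : vec -> vec) (M Ak : R) (xk uk : vec)
  (al A' : R) (y u' x' : vec) : Prop :=
  [/\ Ak + al = M * al ^+ 2 /\ (forall b, Ak + b = M * b ^+ 2 -> b <= al),
      A' = Ak + al,
      y = A'^-1 *: (al *: uk + Ak *: xk),
      Q u' /\ (forall z, Q z ->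
         V u' uk + al * (fd y + dot (gfd y) (u' - y) + h u')
         <= V z uk + al * (fd y + dot (gfd y) (z - y) + h z))
    & x' = A'^-1 *: (al *: u' + Ak *: xk)].

Definition mtm_test (nrm : vec -> R) (fd : vec -> R) (gfd : vec -> vec)
  (delta M : R) (y x' : vec) : Prop :=
  fd x' <= fd y + dot (gfd y) (x' - y) + M / 2 * nrm (x' - y) ^+ 2 + delta.

(* Lcur k is the value of
   L_{k+1} when step k+1 is entered; j k is the number of doublings performed
   at step k+1, so that the accepted constant is Lcur k * 2^(j k). *)
Definition mtm_run (nrm : vec -> R) (Q : set vec) (d : vec -> R) (gd : vec -> vec)
  (h : vec -> R) (fd : vec -> R) (gfd : vec -> vec) (delta L0 : R) (x0 : vec)
  (N : nat) (A : nat -> R) (x u : nat -> vec) (Lcur : nat -> R) (j : nat -> nat)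
  : Prop :=
  let V := bregman d gd in
  [/\ [/\ A 0%N = 0, x 0%N = x0, u 0%N = x0 & Lcur 0%N = L0 / 2],
      (forall k, (k < N)%N -> Lcur k.+1 = Lcur k * 2 ^+ j k / 2),
      (forall k, (k < N)%N -> forall i, (i < j k)%N ->
         exists al A' y u' x',
           mtm_trial Q V h fd gfd (Lcur k * 2 ^+ i) (A k) (x k) (u k) al A' y u' x'
           /\ ~ mtm_test nrm fd gfd delta (Lcur k * 2 ^+ i) y x')
    & (forall k, (k < N)%N ->
         exists al y,
           mtm_trial Q V h fd gfd (Lcur k * 2 ^+ j k) (A k) (x k) (u k)
                     al (A k.+1) y (u k.+1) (x k.+1)
           /\ mtm_test nrm fd gfd delta (Lcur k * 2 ^+ j k) y (x k.+1))].

End Defs.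

From mathcomp Require Import all_boot all_order all_algebra.
From mathcomp Require Import classical_sets reals.
From mathcomp Require Import ring lra.
Set Implicit Arguments. Unset Strict Implicit. Unset Printing Implicit Defensive.
Import Order.TTheory GRing.Theory Num.Theory.
Local Open Scope classical_set_scope.
Local Open Scope ring_scope.

(* Write F = f + h.  An accepted step k -> k+1 with constant M satisfies
   M alpha^2 = A_{k+1}, so the oracle, the acceptance test and the three-point
   inequality for the prox step (with V(x, y) >= |x - y|^2 / 2) combine into
   the potential decrease
     A_{k+1} (F x_{k+1} - F x_* ) + V(x_*, u_{k+1})
       <= A_k (F x_k - F x_* ) + V(x_*, u_k) + 2 A_{k+1} delta,
   hence A_N (F x_N - F x_* ) <= R^2 + 2 N A_N delta.  The test always passes
   once M >= L, so every accepted M is at most 2L; then A_{k+1} <= 2L alpha^2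
   makes sqrt(8 L A_k) grow by at least 1 per step, giving
   8 L A_N >= (N + 1)^2. *)

Section Pairing.
Context {R : realType} {n : nat}.
Implicit Types (c v w p : 'rV[R]_n) (a t : R).

Lemma dot0r c : dot c 0 = 0.
Proof. by rewrite /dot big1 // => i _; rewrite mxE mulr0. Qed.

Lemma dotZr c a v : dot c (a *: v) = a * dot c v.
Proof. by rewrite /dot mulr_sumr; apply: eq_bigr => i _; rewrite mxE mulrCA. Qed.

Lemma dot_convex c v w p t :
  dot c ((t *: v + (1 - t) *: w) - p) = t * dot c (v - p) + (1 - t) * dot c (w - p).
Proof.
rewrite /dot !mulr_sumr -big_split /=.
by apply: eq_bigr => i _; rewrite !mxE; ring.
Qed.

End Pairing.

Lemma sqrt_increment (R : rcfType) (a b : R) :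
  0 <= a <= b -> 0 < b -> 4 * b <= (b - a) ^+ 2 -> Num.sqrt a + 1 <= Num.sqrt b.
Proof.
move=> /andP[a0 ab] b0 hab.
have q0 := sqrtr_ge0 a; have p0 : 0 < Num.sqrt b by rewrite sqrtr_gt0.
have qp : Num.sqrt a <= Num.sqrt b by rewrite ler_sqrt // ltW.
rewrite -(sqr_sqrtr a0) -(sqr_sqrtr (ltW b0)) in hab.
move: (Num.sqrt a) (Num.sqrt b) q0 p0 qp hab => q p q0 p0 qp hab.
(* b - a = (p - q) (p + q) <= 2 p (p - q) *)
have : 4 * p ^+ 2 <= 4 * p ^+ 2 * (p - q) ^+ 2.
  have : (p + q) ^+ 2 <= 4 * p ^+ 2 by nra.
  move/(ler_wpM2l (sqr_ge0 (p - q))).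
  move: hab; rewrite (_ : (p ^+ 2 - q ^+ 2) ^+ 2 = (p - q) ^+ 2 * (p + q) ^+ 2); last by ring.
  lra.
rewrite -[X in X <= _]mulr1 ler_pM2l ?mulr_gt0 ?exprn_gt0 //.
nra.
Qed.

Section Prox.
Context {R : realType} {n : nat} {nrm : 'rV[R]_n -> R}.
Local Notation vec := 'rV[R]_n.
Hypothesis Hn : is_norm nrm.

Lemma nrm_ge0 v : 0 <= nrm v. Proof. by case: Hn. Qed.

Lemma nrmZ (a : R) v : nrm (a *: v) = `|a| * nrm v. Proof. by case: Hn. Qed.

Lemma nrm0 : nrm 0 = 0.
Proof. by rewrite -(scale0r (0 : vec)) nrmZ normr0 mul0r. Qed.

Context {Q : set vec} {d : vec -> R} {gd : vec -> vec}.
Hypotheses (cQ : convex_set Q) (gr : gradient_on nrm Q d gd).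

Lemma gradient_on_segment x y e s : Q x -> Q y -> 0 < e -> 0 < s <= 1 ->
  exists t : R, [/\ 0 < t <= s, Q (t *: x + (1 - t) *: y) &
    `|d (t *: x + (1 - t) *: y) - d y - t * dot (gd y) (x - y)| <= e * t].
Proof.
move=> Qx Qy e0 /andP[s0 s1].
set K := nrm (x - y).
have K0 : 0 <= K by exact: nrm_ge0.
have [del del0 Hd] := gr Qy (divr_gt0 e0 (ltr_pwDr ltr01 K0)).
(* t is chosen so that t * K < del *)
pose t := s * del / (del + K + 1).
have D0 : 0 < del + K + 1 by lra.
have t0 : 0 < t by rewrite divr_gt0 // mulr_gt0.
have ts : t <= s by rewrite /t ler_pdivrMr // ler_pM2l //; lra.
have Qw : Q (t *: x + (1 - t) *: y) by apply: cQ => //; apply/andP; split; lra.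
exists t; split => //; first by rewrite t0 ts.
have step : t *: x + (1 - t) *: y - y = t *: (x - y).
  by apply/rowP => i; rewrite !mxE; ring.
have tK : t * K < del.
  have : 0 <= del * K * (1 - s) by rewrite !mulr_ge0 // ?subr_ge0 // ltW.
  by move=> h; rewrite /t mulrAC ltr_pdivrMr //; nra.
have := Hd _ Qw; rewrite step nrmZ gtr0_norm // dotZr => /(_ tK) /le_trans; apply.
rewrite -mulrA mulrCA ler_pdivrMl; last lra.
by rewrite -/K; nra.
Qed.

Lemma argmin_bregman_le (psi : vec -> R) u z : Q u -> Q z ->
  (forall w, Q w -> psi u <= psi w) -> convex_on Q (fun w => psi w - d w) ->
  bregman d gd z u <= psi z - psi u.
Proof.
move=> Qu Qz u_min psi_d_cvx; apply/ler_addgt0Pr => e e0.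
have [t [/andP[t0 t1] Qw /ler_normlP[_ Hd]]] :=
  gradient_on_segment (s := 1) Qz Qu e0 (ltac:(by rewrite ltr01 lexx)).
have h1 := u_min _ Qw.
have h2 := psi_d_cvx z u t Qz Qu (ltac:(by apply/andP; split; lra)).
(* both estimates carry a factor t, which cancels *)
have : 0 <= t * (dot (gd u) (z - u) + e + psi z - d z - psi u + d u) by lra.
rewrite pmulr_rge0 // /bregman; lra.
Qed.

Lemma half_sqr_nrm_le_bregman x y :
  strongly_convex_on nrm Q d -> Q x -> Q y -> nrm (x - y) ^+ 2 / 2 <= bregman d gd x y.
Proof.
move=> sc Qx Qy; apply/ler_addgt0Pr => e e0.
set K2 := nrm (x - y) ^+ 2.
have K20 : 0 <= K2 by exact: sqr_ge0.
pose s := e / (K2 + e).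
have s0 : 0 < s by rewrite divr_gt0 //; lra.
have s1 : s <= 1 by rewrite ler_pdivrMr; lra.
have sK : s * K2 <= e by rewrite mulrAC ler_pdivrMr; nra.
have [t [/andP[t0 ts] Qw /ler_normlP[Hd _]]] :=
  gradient_on_segment (s := s) Qx Qy (ltac:(lra) : 0 < e / 2) (ltac:(by apply/andP; split; lra)).
have tK : t * K2 <= s * K2 by exact: ler_wpM2r.
have h := sc x y t Qx Qy (ltac:(by apply/andP; split; lra)).
have : 0 <= t * (d x - d y - dot (gd y) (x - y) + e / 2 - (1 - t) / 2 * K2).
  rewrite /K2; lra.
rewrite pmulr_rge0 // /bregman; lra.
Qed.

End Prox.

Section Oracle.
Context {R : realType} {n : nat} {nrm : 'rV[R]_n -> R} {Q : set 'rV[R]_n}.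
Context {f fd : 'rV[R]_n -> R} {gfd : 'rV[R]_n -> 'rV[R]_n} {delta L : R}.
Hypothesis Ho : dL_oracle nrm Q f delta L fd gfd.

Lemma dL_oracle_lower y z : Q y -> Q z -> fd y + dot (gfd y) (z - y) <= f z.
Proof. by move=> Qy Qz; have /andP[h _] := Ho Qz Qy; lra. Qed.

Lemma dL_oracle_upper x : is_norm nrm -> Q x -> f x <= fd x + delta.
Proof.
move=> Hn Qx; have /andP[_ h] := Ho Qx Qx.
by rewrite subrr dot0r (nrm0 Hn) expr2 !mulr0 in h; lra.
Qed.

Lemma dL_oracle_delta_ge0 x : is_norm nrm -> Q x -> 0 <= delta.
Proof.
move=> Hn Qx; have /andP[h1 h2] := Ho Qx Qx.
by rewrite subrr dot0r (nrm0 Hn) expr2 !mulr0 in h1 h2; lra.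
Qed.

Lemma mtm_test_of_le (M : R) y x' :
  Q y -> Q x' -> L <= M -> mtm_test nrm fd gfd delta M y x'.
Proof.
move=> Qy Qx LM; rewrite /mtm_test.
have /andP[h1 _] := Ho Qx Qx; have /andP[_ h2] := Ho Qx Qy.
rewrite subrr dot0r in h1.
have : L / 2 * nrm (x' - y) ^+ 2 <= M / 2 * nrm (x' - y) ^+ 2.
  by apply: ler_wpM2r; [exact: sqr_ge0 | lra].
lra.
Qed.

End Oracle.

Section Trial.
Context {R : realType} {n : nat} {Q : set 'rV[R]_n} {V : 'rV[R]_n -> 'rV[R]_n -> R}.
Context {h fd : 'rV[R]_n -> R} {gfd : 'rV[R]_n -> 'rV[R]_n}.
Variables (M Ak al A' : R) (xk uk y u' x' : 'rV[R]_n).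
Local Notation trial := (mtm_trial Q V h fd gfd M Ak xk uk al A' y u' x').

Lemma mtm_trial_coef : 0 < M -> trial -> [/\ 0 < al, A' = Ak + al & M * al ^+ 2 = A'].
Proof.
move=> M0 [[Hal Hmax] EA _ _ _].
(* by Vieta, the other root is 1 / M - al *)
have := Hmax (1 / M - al).
have -> : M * (1 / M - al) ^+ 2 = 1 / M - 2 * al + M * al ^+ 2.
  by field; rewrite gt_eqF.
move=> /(_ ltac:(lra)) h1.
have : 0 < 1 / M by rewrite divr_gt0.
by split; rewrite ?EA; lra.
Qed.

Lemma mtm_trial_combination : 0 <= Ak -> 0 < M -> trial ->
  [/\ 0 <= al / A' <= 1, y = (al / A') *: uk + (1 - al / A') *: xk
    & x' = (al / A') *: u' + (1 - al / A') *: xk].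
Proof.
move=> Ak0 M0 tr; have [al0 EA _] := mtm_trial_coef M0 tr.
have A'0 : 0 < A' by lra.
have EAk : Ak = A' - al by lra.
case: tr => _ _ -> _ ->; split.
- by rewrite divr_ge0 ?ler_pdivrMr /=; lra.
- by apply/rowP => i; rewrite !mxE EAk; field; rewrite gt_eqF.
- by apply/rowP => i; rewrite !mxE EAk; field; rewrite gt_eqF.
Qed.

Lemma mtm_trial_in : convex_set Q -> Q xk -> Q uk -> 0 <= Ak -> 0 < M -> trial ->
  [/\ Q y, Q x' & Q u'].
Proof.
move=> cQ Qx Qu Ak0 M0 tr; have [a01 -> ->] := mtm_trial_combination Ak0 M0 tr.
have [_ _ _ [Qu' _] _] := tr.
by split; try apply: cQ.
Qed.

End Trial.

Section Step.
Context {R : realType} {n : nat} {nrm : 'rV[R]_n -> R} {Q : set 'rV[R]_n}.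
Context {f h d fd : 'rV[R]_n -> R} {gd gfd : 'rV[R]_n -> 'rV[R]_n} {delta L : R}.
Local Notation V := (bregman d gd).
Hypotheses (Hn : is_norm nrm) (cQ : convex_set Q) (gr : gradient_on nrm Q d gd).
Hypotheses (sc : strongly_convex_on nrm Q d) (ch : convex_on Q h).
Hypothesis Ho : dL_oracle nrm Q f delta L fd gfd.
Variables (M Ak al A' : R) (xk uk y u' x' : 'rV[R]_n).
Hypotheses (Qx : Q xk) (Qu : Q uk) (Ak0 : 0 <= Ak) (M0 : 0 < M).
Hypothesis trial : mtm_trial Q V h fd gfd M Ak xk uk al A' y u' x'.
Local Notation model w := (fd y + dot (gfd y) (w - y) + h w).

Lemma mtm_step_upper : mtm_test nrm fd gfd delta M y x' ->
  A' * (f x' + h x') <= al * model u' + Ak * (f xk + h xk)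
                        + nrm (u' - uk) ^+ 2 / 2 + 2 * A' * delta.
Proof.
rewrite /mtm_test => test.
have [al0 EA Hm] := mtm_trial_coef M0 trial.
have [a01 Ey Ex] := mtm_trial_combination Ak0 M0 trial.
have [Qy Qx' Qu'] := mtm_trial_in cQ Qx Qu Ak0 M0 trial.
have A'0 : 0 < A' by rewrite EA ltr_pwDr.
set a := al / A' in a01 Ey Ex.
set K := nrm (u' - uk).
have fx' := dL_oracle_upper Ho Hn Qx'.
have fxk := dL_oracle_lower Ho Qy Qx.
have hx' : h x' <= a * h u' + (1 - a) * h xk by rewrite Ex; apply: ch.
have lin : dot (gfd y) (x' - y) = a * dot (gfd y) (u' - y) + (1 - a) * dot (gfd y) (xk - y).
  by rewrite Ex dot_convex.
have dist : nrm (x' - y) = a * K.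
  have -> : x' - y = a *: (u' - uk) by rewrite Ex Ey; apply/rowP => i; rewrite !mxE; ring.
  by rewrite (nrmZ Hn) ger0_norm //; case/andP: a01.
rewrite dist in test.
have E1 : f x' + h x' <= a * model u' + (1 - a) * (f xk + h xk)
                         + M / 2 * (a * K) ^+ 2 + 2 * delta.
  have a1 : 0 <= 1 - a by case/andP: a01 => _ ?; lra.
  have := ler_wpM2l a1 fxk; lra.
(* M a^2 A' = M al^2 / A' = 1 *)
have -> : al * model u' + Ak * (f xk + h xk) + K ^+ 2 / 2 + 2 * A' * delta
  = A' * (a * model u' + (1 - a) * (f xk + h xk) + M / 2 * (a * K) ^+ 2 + 2 * delta).
  rewrite /a (_ : M = A' / al ^+ 2); last by rewrite -Hm; field; rewrite gt_eqF.
  by rewrite (_ : Ak = A' - al); [field; rewrite !gt_eqF | lra].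
exact: (ler_wpM2l (ltW A'0) E1).
Qed.

Lemma mtm_step_prox xs : Q xs ->
  V xs u' + V u' uk + al * model u' <= V xs uk + al * model xs.
Proof.
move=> Qs.
have [al0 _ _] := mtm_trial_coef M0 trial.
have [_ _ _ [Qu' u'_min] _] := trial.
have cvx : convex_on Q (fun w => V w uk + al * model w - d w).
  move=> v w t Qv Qw t01; rewrite /bregman !dot_convex.
  have := ler_wpM2l (ltW al0) (ch Qv Qw t01); lra.
have := argmin_bregman_le Hn cQ gr (psi := fun w => V w uk + al * model w) Qu' Qs u'_min cvx.
lra.
Qed.

Lemma mtm_step_potential xs : Q xs -> mtm_test nrm fd gfd delta M y x' ->
  A' * (f x' + h x' - (f xs + h xs)) + V xs u'
    <= Ak * (f xk + h xk - (f xs + h xs)) + V xs uk + 2 * A' * delta.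
Proof.
move=> Qs test.
have [al0 EA _] := mtm_trial_coef M0 trial.
have [Qy _ Qu'] := mtm_trial_in cQ Qx Qu Ak0 M0 trial.
have := mtm_step_upper test.
have := mtm_step_prox Qs.
have := half_sqr_nrm_le_bregman Hn cQ gr sc Qu' Qu.
have := ler_wpM2l (ltW al0) (dL_oracle_lower Ho Qy Qs).
rewrite EA; lra.
Qed.

End Step.

Section Run.
Context {R : realType} {n : nat} {nrm : 'rV[R]_n -> R} {Q : set 'rV[R]_n}.
Context {f h d fd : 'rV[R]_n -> R} {gd gfd : 'rV[R]_n -> 'rV[R]_n} {delta L L0 : R}.
Context {x0 : 'rV[R]_n} {N : nat} {A : nat -> R} {x u : nat -> 'rV[R]_n}.
Context {Lcur : nat -> R} {j : nat -> nat}.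
Hypotheses (Hn : is_norm nrm) (cQ : convex_set Q) (gr : gradient_on nrm Q d gd).
Hypotheses (sc : strongly_convex_on nrm Q d) (ch : convex_on Q h).
Hypothesis Ho : dL_oracle nrm Q f delta L fd gfd.
Hypotheses (Qx0 : Q x0) (L00 : 0 < L0) (L0L : L0 <= L).
Hypothesis run : mtm_run nrm Q d gd h fd gfd delta L0 x0 N A x u Lcur j.
Local Notation M k := (Lcur k * 2 ^+ j k).

Lemma mtm_run_accepted_le k : (k < N)%N -> Q (x k) -> Q (u k) -> 0 <= A k ->
  0 < Lcur k <= L -> M k <= 2 * L.
Proof.
move=> kN Qx Qu Ak0 /andP[Lk0 LkL]; have [_ _ fails _] := run.
case Ej: (j k) => [|i]; first by rewrite expr0 mulr1; lra.
have [al [A' [y [u' [x' [tr untested]]]]]] := fails k kN i (ltac:(by rewrite Ej)).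
have Mi0 : 0 < Lcur k * 2 ^+ i by rewrite mulr_gt0 // exprn_gt0.
have [Qy Qx' _] := mtm_trial_in cQ Qx Qu Ak0 Mi0 tr.
have : Lcur k * 2 ^+ i < L.
  rewrite ltNge; apply/negP => LM; apply: untested.
  exact: (mtm_test_of_le Ho Qy Qx' LM).
by rewrite exprS mulrCA; lra.
Qed.

Lemma mtm_run_state k : (k <= N)%N ->
  [/\ Q (x k), Q (u k), 0 <= A k & 0 < Lcur k <= L].
Proof.
have [[A0 X0 U0 Lc0] HLc _ acc] := run.
elim: k => [|k IH] kN.
  rewrite A0 X0 U0 Lc0; split => //; rewrite divr_gt0 //= ler_pdivrMr //.
  exact: le_trans L0L (ler_peMr (le_trans (ltW L00) L0L) (ler1n R 2)).
have kN' : (k < N)%N := kN.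
have [Qx Qu Ak0 Lk] := IH (ltnW kN).
have [al [y [tr _]]] := acc k kN'.
have M0 : 0 < M k by case/andP: Lk => Lk0 _; rewrite mulr_gt0 // exprn_gt0.
have [al0 EA _] := mtm_trial_coef M0 tr.
have [_ Qx1 Qu1] := mtm_trial_in cQ Qx Qu Ak0 M0 tr.
have := mtm_run_accepted_le kN' Qx Qu Ak0 Lk.
by rewrite HLc //; split => //; [lra | apply/andP; split; lra].
Qed.

Lemma mtm_run_potential xs : Q xs -> forall k, (k <= N)%N ->
  A k * (f (x k) + h (x k) - (f xs + h xs)) + bregman d gd xs (u k)
    <= bregman d gd xs x0 + 2 * k%:R * A k * delta.
Proof.
move=> Qs; have [[A0 X0 U0 _] _ _ acc] := run.
have dl0 := dL_oracle_delta_ge0 Ho Hn Qx0.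
elim=> [|k IH] kN; first by rewrite A0 U0; lra.
have kN' : (k < N)%N := kN.
have [Qx Qu Ak0 /andP[Lk0 _]] := mtm_run_state (ltnW kN).
have [al [y [tr test]]] := acc k kN'.
have M0 : 0 < M k by rewrite mulr_gt0 // exprn_gt0.
have [al0 EA _] := mtm_trial_coef M0 tr.
have := mtm_step_potential Hn cQ gr sc ch Ho Qx Qu Ak0 M0 tr Qs test.
have := IH (ltnW kN).
have : k%:R * (A k * delta) <= k%:R * (A k.+1 * delta).
  by apply: ler_wpM2l; [rewrite ler0n | apply: ler_wpM2r => //; lra].
rewrite -natr1; lra.
Qed.

Lemma mtm_run_A_step k : (k < N)%N ->
  [/\ 0 <= A k <= A k.+1, 0 < A k.+1 & A k.+1 <= 2 * L * (A k.+1 - A k) ^+ 2].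
Proof.
move=> kN; have [_ _ _ acc] := run.
have [Qx Qu Ak0 Lk] := mtm_run_state (ltnW kN).
have [al [y [tr _]]] := acc k kN.
have M0 : 0 < M k by case/andP: Lk => Lk0 _; rewrite mulr_gt0 // exprn_gt0.
have [al0 EA Hm] := mtm_trial_coef M0 tr.
have ML := mtm_run_accepted_le kN Qx Qu Ak0 Lk.
have -> : A k.+1 - A k = al by lra.
split; [apply/andP; split; lra | lra | ].
by rewrite -{1}Hm ler_wpM2r ?sqr_ge0.
Qed.

Lemma mtm_run_growth k : (0 < k <= N)%N -> k.+1%:R <= Num.sqrt (8 * L * A k).
Proof.
have [_ _ _ /andP[Lc0 LcL]] := mtm_run_state (leq0n N).
have L0' : 0 < L := lt_le_trans Lc0 LcL.
have [[A0 _ _ _] _ _ _] := run.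
have step i : (i < N)%N -> [/\ 0 <= 8 * L * A i <= 8 * L * A i.+1,
    0 < 8 * L * A i.+1 & 4 * (8 * L * A i.+1) <= (8 * L * A i.+1 - 8 * L * A i) ^+ 2].
  move=> iN; have [/andP[Ai0 AiA] Ai1 Hi] := mtm_run_A_step iN.
  split; [apply/andP; split; nra | nra | ].
  have := ler_wpM2l (ltW L0') Hi; nra.
elim: k => [//|[|k] IH] /andP[_ kN].
- have [_ b0 hb] := step 0%N kN; rewrite A0 mulr0 subr0 expr2 ler_pM2r // in hb.
  have := sqr_sqrtr (ltW b0); have := sqrtr_ge0 (8 * L * A 1%N); nra.
- have [ab b0 hb] := step _ kN.
  apply: le_trans _ (sqrt_increment ab b0 hb); rewrite -natr1 lerD2r.
  exact/IH/ltnW.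
Qed.

End Run.

Theorem theorem3 (R : realType) (n : nat) (nrm : 'rV[R]_n -> R)
  (Q : set 'rV[R]_n) (f h : 'rV[R]_n -> R) (gf : 'rV[R]_n -> 'rV[R]_n) (L : R)
  (xstar : 'rV[R]_n) (d : 'rV[R]_n -> R) (gd : 'rV[R]_n -> 'rV[R]_n)
  (x0 : 'rV[R]_n) (Rad : R) (delta : R) (fd : 'rV[R]_n -> R)
  (gfd : 'rV[R]_n -> 'rV[R]_n) (N : nat) (L0 : R)
  (A : nat -> R) (x u : nat -> 'rV[R]_n) (Lcur : nat -> R) (j : nat -> nat) :
  is_norm nrm ->
  closed_set nrm Q -> convex_set Q ->
  convex_on Q f -> continuous_on nrm Q f -> gradient_on nrm Q f gf ->
  (forall y z, Q y -> Q z -> dualnorm nrm (gf y - gf z) <= L * nrm (y - z)) ->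
  convex_on Q h ->
  Q xstar -> (forall z, Q z -> f xstar + h xstar <= f z + h z) ->
  gradient_on nrm Q d gd -> vcontinuous_on nrm Q gd -> strongly_convex_on nrm Q d ->
  Q x0 -> bregman d gd xstar x0 <= Rad ^+ 2 ->
  dL_oracle nrm Q f delta L fd gfd ->
  (1 <= N)%N -> 0 < L0 -> L0 <= L ->
  mtm_run nrm Q d gd h fd gfd delta L0 x0 N A x u Lcur j ->
  (f (x N) + h (x N)) - (f xstar + h xstar)
    <= 8 * L * Rad ^+ 2 / (N.+1%:R) ^+ 2 + 2 * N%:R * delta.
Proof.
(* smoothness of f enters only through the oracle *)
move=> Hn _ cQ _ _ _ _ ch Qs _ gr _ sc Qx0 HR Ho N1 L00 L0L run.
have [_ QuN AN0 _] := mtm_run_state cQ Ho Qx0 L00 L0L run (leqnn N).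
have pot := mtm_run_potential Hn cQ gr sc ch Ho Qx0 L00 L0L run Qs (leqnn N).
have V0 : 0 <= bregman d gd xstar (u N).
  apply: le_trans (half_sqr_nrm_le_bregman Hn cQ gr sc Qs QuN).
  by rewrite divr_ge0 ?sqr_ge0.
have T0 : 0 < (N.+1%:R : R) ^+ 2 by rewrite exprn_gt0 // ltr0n.
have growth : N.+1%:R ^+ 2 <= 8 * L * A N.
  have B0 : 0 <= 8 * L * A N by rewrite !mulr_ge0 //; lra.
  have := mtm_run_growth (k := N) cQ Ho Qx0 L00 L0L run (ltac:(by rewrite N1 leqnn)).
  have := sqr_sqrtr B0; have := sqrtr_ge0 (8 * L * A N); have := ler0n R N.+1; nra.
have ANp : 0 < A N.
  have L0' : 0 < L by lra.
  by rewrite -(pmulr_rgt0 _ (mulr_gt0 (ltr0n R 8) L0')); lra.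
have B_A : Rad ^+ 2 <= 8 * L * Rad ^+ 2 / N.+1%:R ^+ 2 * A N.
  rewrite mulrAC ler_pdivlMr //; have := ler_wpM2l (sqr_ge0 Rad) growth; nra.
rewrite -(ler_pM2l ANp); set B := 8 * L * Rad ^+ 2 / _ in B_A *; lra.
Qed.
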